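(* Let $p=p(n)$ and suppose that $d=p(n-1)\ge \log^3 n$. Let $G=(V,E)$ be an $n$-vertex graph such that for some positive constant $c$: (i) for every $S\subseteq V$ with $s=|S|$ and every $r\in\mathbb N$, $\big|\bigcup_{v\in S}N(v,r)\big|\ge c\min\{sd^r,n\}$, and if $sd^r<n/\log n$ then $\big|\bigcup_{v\in S}N(v,r)\big|=(1+o(1))sd^r$; (ii) for every $v\in V$ and $r\in\mathbb N$ with $\sqrt n<d^{r+1}\le\sqrt n\log n$ there is a family $\{W(u)\subseteq S(u,r+1):u\in S(v,r)\}$ of pairwise disjoint sets with $|W(u)|=(1+o(1))d^{r+1}$ for each $u$. Let $X\subseteq V$ be any set of at most $2\sqrt n$ vertices and let $r=r(n)\in\mathbb N$ be such that $d^r\ge \sqrt n\log n$. Let $Y\subseteq V$ be a random set obtained by including each vertex of $V$ independently with probability $C/\sqrt n$, where $C\in\mathbb R$. Then, for a sufficiently large constant $C$, with probability $1-o(n^{-2})$ (over the choice of $Y$) it is possible to assign all the vertices of $X$ to distinct vertices of $Y$ such that each $u\in X$ is assigned to a vertex of $Y$ within distance $r$ of $u$.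
   Context: $\log$ is the natural logarithm. For a vertex $v$ and $r\ge0$, $S(v,r)$ is the set of vertices at distance exactly $r$ from $v$ and $N(v,r)$ is the set of vertices at distance at most $r$ from $v$. Asymptotic notation refers to $n\to\infty$ (the graph depends on $n$), with the $o(\cdot)$ terms uniform in the quantified parameters. *)

From HB Require Import structures.
From mathcomp Require Import all_boot all_order all_algebra.
From mathcomp Require Import boolp reals exp.
Set Implicit Arguments. Unset Strict Implicit. Unset Printing Implicit Defensive.
Import Order.TTheory GRing.Theory Num.Theory.
Local Open Scope ring_scope.

Section Graph.
Variables (T : finType) (e : rel T).

Definition nball (v : T) (r : nat) : {set T} :=
  iter r (fun A : {set T} => A :|: [set y | [exists x in A, e x y]]) [set v].

Definition sphere (v : T) (r : nat) : {set T} :=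
  if r is r'.+1 then nball v r'.+1 :\: nball v r' else [set v].

Definition nball_set (S : {set T}) (r : nat) : {set T} :=
  \bigcup_(v in S) nball v r.

Definition assignable (X Y : {set T}) (r : nat) : Prop :=
  exists f : T -> T, {in X &, injective f} /\
    (forall u, u \in X -> f u \in Y /\ f u \in nball u r).
End Graph.

Definition dpar (R : realType) (p : nat -> R) (n : nat) : R := p n * (n%:R - 1).

Definition vanishing (R : realType) (f : nat -> R) : Prop :=
  forall eps : R, 0 < eps -> exists N : nat, forall n, (N <= n)%N -> `|f n| <= eps.

(* Property (i) for an n-vertex graph, constant c, parameter d, and error
   eps standing for the o(1) term. *)
Definition prop_i (R : realType) (n : nat) (e : rel 'I_n) (c d eps : R) : Prop :=
  forall (S : {set 'I_n}) (r : nat),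
    c * Num.min (#|S|%:R * d ^+ r) n%:R <= #|nball_set e S r|%:R /\
    (#|S|%:R * d ^+ r < n%:R / ln n%:R ->
       `|#|nball_set e S r|%:R - #|S|%:R * d ^+ r| <= eps * (#|S|%:R * d ^+ r)).

Definition prop_ii (R : realType) (n : nat) (e : rel 'I_n) (d eps : R) : Prop :=
  forall (v : 'I_n) (r : nat),
    Num.sqrt n%:R < d ^+ r.+1 -> d ^+ r.+1 <= Num.sqrt n%:R * ln n%:R ->
    exists W : 'I_n -> {set 'I_n},
      (forall u, u \in sphere e v r -> W u \subset sphere e u r.+1) /\
      (forall u w, u \in sphere e v r -> w \in sphere e v r -> u != w ->
         [disjoint W u & W w]) /\
      (forall u, u \in sphere e v r ->
         `|#|W u|%:R - d ^+ r.+1| <= eps * d ^+ r.+1).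

(* Probability that the random set Y (each vertex independently with
   probability q) does NOT allow an assignment of X. *)
Definition fail_prob (R : realType) (n : nat) (e : rel 'I_n) (q : R)
    (X : {set 'I_n}) (r : nat) : R :=
  \sum_(Y : {set 'I_n} | ~~ `[< assignable e X Y r >])
     q ^+ #|Y| * (1 - q) ^+ (n - #|Y|).

(* By Hall's theorem, X cannot be assigned into Y only if some nonempty
   S \subset X has fewer than |S| vertices of Y in Z_S, the union of the balls
   N(v, r), v in S.  Property (i) and d^r >= sqrt n ln n give
   |Z_S| >= c sqrt n min(|S| ln n, sqrt n), and Markov's inequality for
   2^-|Y :&: Z_S| bounds the probability of this event by
   2^|S| exp(-q |Z_S| / 2) <= (2 n^-8)^|S| + exp(-6 sqrt n) as soon as C c >= 16.
   Summing over the subsets of X, |X| <= 2 sqrt n, gives at most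
   (1 + 2 n^-8)^|X| - 1 + 2^|X| exp(-6 sqrt n) = O(n^-7) + exp(-4 sqrt n).
   Only the lower bound in property (i) is needed. *)

From HB Require Import structures.
From mathcomp Require Import all_boot all_order all_algebra.
From mathcomp Require Import boolp reals sequences exp.
From mathcomp Require Import zify ring lra.
Import Order.TTheory GRing.Theory Num.Theory.

Set Implicit Arguments.
Unset Strict Implicit.
Unset Printing Implicit Defensive.

Section Hall.
Variable T : finType.
Implicit Types (X S V : {set T}) (A B : T -> {set T}).

Local Notation nbhd A S := (\bigcup_(u in S) A u).

Definition hall_condition X A := forall S, S \subset X -> #|S| <= #|nbhd A S|.

Definition distinct_reps X A :=
  exists f : T -> T, {in X &, injective f} /\ forall u, u \in X -> f u \in A u.

Lemma distinct_reps_sub X A B :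
  (forall u, u \in X -> A u \subset B u) -> distinct_reps X A -> distinct_reps X B.
Proof.
by move=> sAB [f [injf fA]]; exists f; split=> // u uX; apply: subsetP (sAB u uX) _ (fA u uX).
Qed.

Lemma distinct_reps_split X S V A :
  S \subset X -> distinct_reps S (fun u => A u :&: V) ->
  distinct_reps (X :\: S) (fun u => A u :\: V) -> distinct_reps X A.
Proof.
move=> sSX [f [injf fAV]] [g [injg gAV]].
have gX u : u \in X -> u \notin S -> g u \in A u :\: V.
  by move=> uX uS; apply: gAV; rewrite inE uS uX.
exists (fun u => if u \in S then f u else g u); split=> [u v uX vX /= | u uX /=].
  case: ifP => uS; case: ifP => vS.
  - exact: injf.
  - by move=> fg; have:= gX v vX (negbT vS); rewrite -fg inE; case/setIP: (fAV u uS) => _ ->.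
  - by move=> fg; have:= gX u uX (negbT uS); rewrite fg inE; case/setIP: (fAV v vS) => _ ->.
  - by apply: injg; rewrite inE ?uS ?vS.
case: ifP => uS; first by case/setIP: (fAV u uS).
by case/setDP: (gX u uX (negbT uS)).
Qed.

Lemma bigcup_setIr S V A : nbhd (fun u => A u :&: V) S = nbhd A S :&: V.
Proof.
apply/setP=> z; rewrite inE.
apply/bigcupP/andP=> [[u uS /setIP[zA zV]] | [/bigcupP[u uS zA] zV]].
  by split=> //; apply/bigcupP; exists u.
by exists u; rewrite // inE zA.
Qed.

Lemma bigcup_setDr S V A : nbhd (fun u => A u :\: V) S = nbhd A S :\: V.
Proof. by rewrite setDE -bigcup_setIr; apply: eq_bigr => u _; rewrite setDE. Qed.

Lemma hall_condition_sub X S A : hall_condition X A -> S \subset X -> hall_condition S A.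
Proof. by move=> hX sSX S' sS'S; apply/hX/(subset_trans sS'S). Qed.

Lemma hall_condition_setD_tight X S A :
  hall_condition X A -> S \subset X -> #|nbhd A S| <= #|S| ->
  hall_condition (X :\: S) (fun u => A u :\: nbhd A S).
Proof.
move=> hX sSX tightS S' sS'; rewrite bigcup_setDr.
have disjS' : [disjoint S' & S].
  by apply/pred0P=> z /=; apply/andP=> -[/(subsetP sS') /setDP[_ /negP]].
have := hX (S' :|: S); rewrite subUset sSX (subset_trans sS' (subsetDl _ _)) => /(_ isT).
rewrite bigcup_setU cardsU (disjoint_setI0 disjS') cards0 subn0.
have := cardsUI (nbhd A S') (nbhd A S); rewrite cardsD; lia.
Qed.

Lemma hall_condition_setD1 X A x y :
  (forall S, S \subset X :\ x -> S != set0 -> #|S| < #|nbhd A S|) ->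
  hall_condition (X :\ x) (fun u => A u :\ y).
Proof.
move=> slack S sS; rewrite bigcup_setDr.
have [->|S0] := eqVneq S set0; first by rewrite cards0.
have := slack S sS S0; have := cardsD1 y (nbhd A S); lia.
Qed.

Theorem hall_marriage X A : hall_condition X A -> distinct_reps X A.
Proof.
have [k] := ubnP #|X|; elim: k X A => [X A|k IH X A /ltnSE leXk hX]; first by rewrite ltn0.
have [/existsP[S /and4P[sSX S0 SX tightS]] | noTight] := boolP [exists S : {set T},
  [&& S \subset X, S != set0, S != X & #|nbhd A S| <= #|S|]].
- have ltSX : #|S| < #|X| by rewrite proper_card // properEneq SX.
  have ltXS : #|X :\: S| < #|X|.
    by move: S0; rewrite -card_gt0 cardsD (setIidPr sSX); lia.
  apply: (distinct_reps_split (V := nbhd A S) sSX).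
    apply: distinct_reps_sub (IH S A (leq_trans ltSX leXk) (hall_condition_sub hX sSX)).
    by move=> u uS; rewrite subsetI subxx (bigcup_sup u uS).
  by apply: IH (leq_trans ltXS leXk) _; exact: hall_condition_setD_tight.
- have [->|[x xX]] := set_0Vmem X; first by exists id; split=> [u v|u]; rewrite inE.
  have [y yAx] : exists y, y \in A x.
    by apply/set0Pn; have := hX [set x]; rewrite sub1set xX big_set1 cards1 card_gt0; apply.
  apply: (@distinct_reps_split X [set x] [set y]); first by rewrite sub1set.
    exists (fun=> y); split=> [u v /set1P-> /set1P-> //|u /set1P->].
    by rewrite inE yAx set11.
  apply: IH; first by move: leXk; rewrite (cardsD1 x X) xX; lia.
  apply: hall_condition_setD1 => S sS S0; rewrite ltnNge.
  move: noTight; rewrite negb_exists => /forallP/(_ S); apply: contra => tightS.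
  have sSX : S \subset X := subset_trans sS (subsetDl _ _).
  rewrite sSX S0 tightS andbT /=; apply: contraTneq sS => ->.
  by apply/subsetPn; exists x; rewrite // !inE eqxx.
Qed.
End Hall.

Lemma not_assignable_deficient (T : finType) (e : rel T) (X Y : {set T}) r :
  ~ assignable e X Y r ->
  exists2 S : {set T}, S \subset X & #|Y :&: nball_set e S r| < #|S|.
Proof.
move=> notXY; have [/exists_inP[S sSX defS] | noDef] := boolP
  [exists (S : {set T} | S \subset X), #|Y :&: nball_set e S r| < #|S|].
  by exists S.
have [f [injf fA]] : distinct_reps X (fun u => nball e u r :&: Y).
  apply: hall_marriage => S sSX; rewrite bigcup_setIr setIC leqNgt.
  by apply: contraNN noDef => defS; apply/exists_inP; exists S.
by case: notXY; exists f; split=> // u /fA /setIP[].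
Qed.

Local Open Scope ring_scope.

Lemma sum_set_prod (R : comNzRingType) (T : finType) (F : T -> bool -> R) :
  \sum_(Y : {set T}) \prod_i F i (i \in Y) = \prod_i (F i true + F i false).
Proof.
transitivity (\prod_(i : T) \sum_(b : bool) F i b); last first.
  by apply: eq_bigr => i _; rewrite big_bool.
rewrite bigA_distr_bigA (reindex (@FinSet T)) /=; last first.
  by exists (@finfun_of_set T) => [f _|[f] _].
by apply: eq_bigr => f _; apply: eq_bigr => i _; rewrite unlock.
Qed.

Lemma prod_if_mem (R : comNzRingType) (T : finType) (Y : {set T}) (x : R) :
  \prod_i (if i \in Y then x else 1) = x ^+ #|Y|.
Proof. by rewrite -big_mkcond /= prodr_const. Qed.

Lemma sum_subset_expr (R : comNzRingType) (T : finType) (X : {set T}) (x : R) :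
  \sum_(S : {set T} | S \subset X) x ^+ #|S| = (1 + x) ^+ #|X|.
Proof.
pose F i (b : bool) := if b then (if i \in X then x else 0) else 1.
transitivity (\sum_(S : {set T}) \prod_i F i (i \in S)).
  rewrite big_mkcond /=; apply: eq_bigr => S _.
  have [sSX|/subsetPn[i iS iX]] := boolP (S \subset X).
    rewrite -prod_if_mem; apply: eq_bigr => i _; rewrite /F.
    by case: ifP => // iS; rewrite (subsetP sSX i iS).
  by rewrite (bigD1 i) //= /F iS (negbTE iX) mul0r.
rewrite sum_set_prod -prod_if_mem; apply: eq_bigr => i _; rewrite /F.
by case: (i \in X); rewrite ?add0r // addrC.
Qed.

Section RandomSubset.
Variables (R : realFieldType) (n : nat) (q : R).

Definition set_weight (Y : {set 'I_n}) := q ^+ #|Y| * (1 - q) ^+ (n - #|Y|).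

Lemma set_weightE Y : set_weight Y = \prod_i (if i \in Y then q else 1 - q).
Proof.
rewrite /set_weight; have -> : (n - #|Y| = #|~: Y|)%N.
  by have := cardsC Y; rewrite card_ord; lia.
rewrite -!prod_if_mem -big_split /=; apply: eq_bigr => i _.
by rewrite inE; case: (i \in Y); rewrite ?mulr1 ?mul1r.
Qed.

Lemma sum_set_weight_halfpow (Z : {set 'I_n}) :
  \sum_Y set_weight Y * 2^-1 ^+ #|Y :&: Z| = (1 - q / 2) ^+ #|Z|.
Proof.
pose F i (b : bool) := if b then q * (if i \in Z then 2^-1 else 1) else 1 - q.
transitivity (\sum_(Y : {set 'I_n}) \prod_i F i (i \in Y)).
  apply: eq_bigr => Y _; rewrite set_weightE -prod_if_mem -big_split /=.
  apply: eq_bigr => i _; rewrite /F inE.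
  by case: (i \in Y); case: (i \in Z); rewrite /= ?mulr1 ?mul1r // mulrC.
rewrite sum_set_prod -prod_if_mem; apply: eq_bigr => i _.
by rewrite /F; case: (i \in Z); lra.
Qed.

Hypothesis q01 : 0 <= q <= 1.

Lemma set_weight_ge0 Y : 0 <= set_weight Y.
Proof. by case/andP: q01 => q0 q1; rewrite mulr_ge0 // exprn_ge0 // subr_ge0. Qed.

(* Markov's inequality for 2^-|Y :&: Z|, whose mean is computed above. *)
Lemma sum_set_weight_small_meet (Z : {set 'I_n}) k :
  \sum_(Y | (#|Y :&: Z| < k)%N) set_weight Y <= 2 ^+ k * (1 - q / 2) ^+ #|Z|.
Proof.
rewrite -sum_set_weight_halfpow mulr_sumr.
rewrite [X in _ <= X](bigID (fun Y => #|Y :&: Z| < k)%N) /=.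
rewrite -[X in X <= _]addr0; apply: lerD; last first.
  apply: sumr_ge0 => Y _; rewrite mulr_ge0 ?exprn_ge0 //.
  by rewrite mulr_ge0 ?set_weight_ge0 // exprn_ge0 // invr_ge0.
apply: ler_sum => Y small; rewrite mulrCA -[X in X <= _]mulr1 ler_wpM2l ?set_weight_ge0 //.
rewrite -(subnK (ltnW small)) exprD -mulrA -exprMn mulfV ?pnatr_eq0 // expr1n mulr1.
by rewrite exprn_ege1 // ler1n.
Qed.

End RandomSubset.

Lemma fail_prob_le_deficient (R : realType) n (q : R) (e : rel 'I_n) (X : {set 'I_n}) r :
  0 <= q <= 1 ->
  fail_prob e q X r <= \sum_(S : {set 'I_n} | (S \subset X) && (S != set0))
     \sum_(Y | (#|Y :&: nball_set e S r| < #|S|)%N) set_weight q Y.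
Proof.
move=> q01.
under eq_bigr do rewrite big_mkcond.
rewrite exchange_big /fail_prob [X in X <= _]big_mkcond /=.
apply: ler_sum => Y _; case: asboolP => [_|/not_assignable_deficient[S sSX defS]].
  by apply: sumr_ge0 => S _; case: ifP => // _; apply: (set_weight_ge0 q01).
have S0 : S != set0 by rewrite -card_gt0 (leq_ltn_trans _ defS).
rewrite (bigD1 S) /= ?sSX ?S0 // defS -[X in X <= _]addr0 lerD //.
by apply: sumr_ge0 => S' _; case: ifP => // _; apply: (set_weight_ge0 q01).
Qed.


Lemma expr1D_sub1_le (R : realFieldType) (a : R) k :
  0 <= a -> (1 + a) ^+ k - 1 <= k%:R * a * (1 + a) ^+ k.
Proof.
move=> a0; elim: k => [|k IH]; first by rewrite expr0 !mul0r subrr.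
have ge1 : 1 <= (1 + a) ^+ k by rewrite exprn_ege1 // lerDl.
have : a * (1 + a) ^+ k <= (1 + a) * (1 + a) ^+ k by rewrite ler_wpM2r ?lerDr; lra.
rewrite exprS -natr1; nra.
Qed.

Lemma expr1D_le_expR (R : realType) (a : R) k : -1 <= a -> (1 + a) ^+ k <= expR (a * k%:R).
Proof.
move=> a_ge; rewrite expRM_natr lerXn2r ?nnegrE ?expR_ge0 ?expR_ge1Dx //; lra.
Qed.

Lemma expr1D_sub1_le_expR1 (R : realType) (a : R) k :
  0 <= a -> k%:R * a <= 1 -> (1 + a) ^+ k - 1 <= expR 1 * (k%:R * a).
Proof.
move=> a0 ka1; apply: le_trans (expr1D_sub1_le k a0) _.
rewrite mulrC ler_wpM2r ?mulr_ge0 //; apply: le_trans (expr1D_le_expR k _) _; first lra.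
by rewrite ler_expR mulrC.
Qed.

Lemma two_expr_le_expR (R : realType) k : 2 ^+ k <= expR k%:R :> R.
Proof. by have := @expr1D_le_expR R 1 k; rewrite mul1r; apply; lra. Qed.

(* The minimum reflects the two regimes of property (i): small sets expand by
   a factor [sqrt N * ln N], large ones reach a constant fraction of the graph. *)
Lemma two_expr_expR_min_le (R : realType) (N : R) k :
  0 < N -> k%:R <= 2 * Num.sqrt N ->
  2 ^+ k * expR (- (8 * Num.min (k%:R * ln N) (Num.sqrt N)))
    <= (2 / N ^+ 8) ^+ k + expR (- (6 * Num.sqrt N)).
Proof.
move=> N_gt0 k_le; have [_|large] := leP (k%:R * ln N) (Num.sqrt N).
  rewrite -[X in X <= _]addr0; apply: lerD; last exact: expR_ge0.
  have -> : - (8 * (k%:R * ln N)) = k%:R * - (8%:R * ln N) by ring.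
  by rewrite expRM_natl expRN expRM_natl lnK ?posrE // -exprMn.
rewrite -[X in X <= _]add0r; apply: lerD.
  by rewrite exprn_ge0 // divr_ge0 // exprn_ge0 // ltW.
apply: le_trans (ler_wpM2r (expR_ge0 _) (two_expr_le_expR _ k)) _.
by rewrite -expRD ler_expR; lra.
Qed.

Lemma sum_nonempty_subset_le (R : realFieldType) (T : finType) (X : {set T}) (a E : R) :
  0 <= E -> \sum_(S : {set T} | (S \subset X) && (S != set0)) (a ^+ #|S| + E)
    <= (1 + a) ^+ #|X| - 1 + 2 ^+ #|X| * E.
Proof.
move=> E0; have sum_E : \sum_(S : {set T} | S \subset X) E = 2 ^+ #|X| * E.
  by rewrite -(sum_subset_expr X 1) mulr_suml; apply: eq_bigr => S _; rewrite expr1n mul1r.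
have : \sum_(S : {set T} | S \subset X) (a ^+ #|S| + E) = (1 + a) ^+ #|X| + 2 ^+ #|X| * E.
  by rewrite big_split /= sum_subset_expr sum_E.
rewrite (bigD1 set0) ?sub0set //= cards0 expr0; lra.
Qed.

Lemma expR_neg_sqrt_le (R : realType) (N delta : R) :
  0 < N -> 16 <= delta * N -> expR (- (4 * Num.sqrt N)) <= delta / (2 * N ^+ 2).
Proof.
move=> N_gt0 deltaN; set m := Num.sqrt N.
have m_ge0 : 0 <= m := sqrtr_ge0 N.
have mm : m ^+ 2 = N by rewrite sqr_sqrtr // ltW.
have exp_ge : 5 * N ^+ 3 <= expR (4 * m).
  have := expR_ge1Dxn 5 (mulr_ge0 (ler0n R 4) m_ge0).
  have -> : (4 * m) ^+ 6 = 4096 * N ^+ 3 by rewrite -mm; ring.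
  have : 0 <= N ^+ 3 by rewrite exprn_ge0 // ltW.
  have -> : 5.+1`!%:R = 720 :> R by [].
  lra.
have delta_ge0 : 0 <= delta.
  by rewrite -(pmulr_lge0 _ N_gt0); apply: le_trans deltaN; lra.
rewrite expRN -div1r ler_pdivrMr ?expR_gt0 // mulrAC ler_pdivlMr ?mulr_gt0 ?exprn_gt0 //.
have := ler_wpM2l delta_ge0 exp_ge; have : 0 <= N ^+ 2 by rewrite exprn_ge0 // ltW.
rewrite !exprS expr0; nra.
Qed.

Lemma expr1D_sub1_le_div (R : realType) (N delta : R) k :
  2 <= N -> k%:R <= 2 * N -> 8 * expR 1 <= delta * N ->
  (1 + 2 / N ^+ 8) ^+ k - 1 <= delta / (2 * N ^+ 2).
Proof.
move=> N_ge2 k_le deltaN.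
have N_neq0 : N != 0 by rewrite gt_eqF //; lra.
have N7_gt0 : 0 < N ^+ 7 by rewrite exprn_gt0 //; lra.
have N4_ge1 : 1 <= N ^+ 4 by rewrite exprn_ege1 //; lra.
have ka : k%:R * (2 / N ^+ 8) <= 4 / N ^+ 7.
  rewrite mulrA ler_pdivrMr ?exprn_gt0 //; last lra.
  have -> : 4 / N ^+ 7 * N ^+ 8 = 4 * N by field.
  lra.
have N7_ge4 : 4 <= N ^+ 7.
  have N5_ge1 : 1 <= N ^+ 5 by rewrite exprn_ege1 //; lra.
  rewrite -[7%N]/(2 + 5)%N exprD expr2; nra.
apply: le_trans (expr1D_sub1_le_expR1 _ (le_trans ka _)) _.
- by rewrite divr_ge0 ?exprn_ge0 //; lra.
- by rewrite ler_pdivrMr // mul1r.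
apply: le_trans (ler_wpM2l (expR_ge0 1) ka) _.
rewrite mulrA ler_pdivrMr //.
have -> : delta / (2 * N ^+ 2) * N ^+ 7 = delta * N * N ^+ 4 / 2.
  by field.
have := expR_gt0 (1 : R); nra.
Qed.

Section ExpandingGraph.
Variables (R : realType) (n : nat) (e : rel 'I_n) (c d C : R) (r : nat).
Local Notation m := (Num.sqrt (n%:R : R)).
Local Notation L := (ln (n%:R : R)).
Local Notation q := (C / m).

Hypotheses (c_gt0 : 0 < c) (C_gt0 : 0 < C) (C_le_m : C <= m) (Cc_ge16 : 16 <= C * c).
Hypothesis expansion : forall S : {set 'I_n},
  c * Num.min (#|S|%:R * d ^+ r) n%:R <= #|nball_set e S r|%:R.
Hypothesis dr_ge : m * L <= d ^+ r.

Let m_gt0 : 0 < m. Proof. exact: lt_le_trans C_le_m. Qed.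

Let q01 : 0 <= q <= 1.
Proof. by apply/andP; split; [rewrite divr_ge0 ?ltW | rewrite ler_pdivrMr // mul1r]. Qed.

Lemma deficient_prob_le_expR (S : {set 'I_n}) :
  \sum_(Y | (#|Y :&: nball_set e S r| < #|S|)%N) set_weight q Y
    <= 2 ^+ #|S| * expR (- (8 * Num.min (#|S|%:R * L) m)).
Proof.
apply: le_trans (sum_set_weight_small_meet q01 _ _) _.
rewrite ler_wpM2l ?exprn_ge0 //.
have /andP[q_ge0 q_le1] := q01.
apply: le_trans (expr1D_le_expR _ _) _; first lra.
rewrite ler_expR; set z := #|nball_set e S r|%:R; set mu := Num.min _ m.
have n_gt0 : 0 < n%:R :> R by rewrite -sqrtr_gt0.
have L_ge0 : 0 <= L by rewrite ln_ge0 // ler1n -(ltr0n R).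
have mu_ge0 : 0 <= mu by rewrite le_min mulr_ge0 ?sqrtr_ge0.
have z_ge : c * (m * mu) <= z.
  apply: le_trans (expansion S); apply: ler_wpM2l; first exact: ltW.
  rewrite minr_pMr ?sqrtr_ge0 //.
  rewrite le_min !ge_min -expr2 (sqr_sqrtr (ltW n_gt0)) lexx orbT andbT.
  by rewrite mulrCA ler_wpM2l.
have qm : q * m = C by rewrite divfK ?gt_eqF.
have : q * (c * (m * mu)) = C * c * mu.
  by transitivity (q * m * c * mu); [ring | rewrite qm].
have := ler_wpM2l q_ge0 z_ge; have := ler_wpM2r mu_ge0 Cc_ge16.
rewrite mulNr lerN2 mulrAC; lra.
Qed.

Lemma fail_prob_le (delta : R) (X : {set 'I_n}) :
  (2 <= n)%N -> 8 * expR 1 <= delta * n%:R -> #|X|%:R <= 2 * m ->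
  fail_prob e q X r <= delta / n%:R ^+ 2.
Proof.
move=> n_ge2 deltaN X_le.
have N_ge2 : 2 <= n%:R :> R by rewrite ler_nat.
have mm : m * m = n%:R by rewrite -expr2 sqr_sqrtr //; lra.
have m_le : m <= n%:R by have := mulr_ge0 (ltW m_gt0) (ltW m_gt0); nra.
have e_ge2 : 2 <= expR 1 :> R by have := expR_ge1Dx (1 : R); lra.
have card_le (S : {set 'I_n}) : S \subset X -> #|S|%:R <= 2 * m.
  by move=> sSX; apply: le_trans X_le; rewrite ler_nat subset_leq_card.
apply: le_trans (fail_prob_le_deficient e X r q01) _.
apply: (@le_trans _ _ (\sum_(S : {set 'I_n} | (S \subset X) && (S != set0))
  ((2 / n%:R ^+ 8) ^+ #|S| + expR (- (6 * m))))).
  apply: ler_sum => S /andP[sSX _]; apply: le_trans (deficient_prob_le_expR S) _.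
  by apply: two_expr_expR_min_le (card_le S sSX); lra.
apply: le_trans (sum_nonempty_subset_le X _ (expR_ge0 _)) _.
have -> : delta / n%:R ^+ 2 = delta / (2 * n%:R ^+ 2) + delta / (2 * n%:R ^+ 2).
  by field; rewrite pnatr_eq0 -lt0n (leq_trans _ n_ge2).
apply: lerD; first by apply: expr1D_sub1_le_div; lra.
apply: le_trans (ler_wpM2r (expR_ge0 _) (two_expr_le_expR _ _)) _.
rewrite -expRD; apply: le_trans (expR_neg_sqrt_le _ _); last lra; last lra.
by rewrite ler_expR; lra.
Qed.

End ExpandingGraph.

Theorem lemma2p2 (R : realType) (p : nat -> R) (G : forall n : nat, rel 'I_n)
    (c : R) (eps : nat -> R) (N0 : nat) :
  (forall n, symmetric (G n) /\ irreflexive (G n)) ->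
  0 < c -> vanishing eps ->
  (forall n, (N0 <= n)%N -> ln (n%:R : R) ^+ 3 <= dpar p n) ->
  (forall n, (N0 <= n)%N -> prop_i (G n) c (dpar p n) (eps n)) ->
  (forall n, (N0 <= n)%N -> prop_ii (G n) (dpar p n) (eps n)) ->
  exists C0 : R, forall C : R, C0 <= C ->
    forall delta : R, 0 < delta -> exists N : nat, forall n : nat, (N <= n)%N ->
      forall (X : {set 'I_n}) (r : nat),
        #|X|%:R <= 2 * Num.sqrt (n%:R : R) ->
        Num.sqrt (n%:R : R) * ln (n%:R : R) <= dpar p n ^+ r ->
        fail_prob (G n) (C / Num.sqrt n%:R) X r <= delta / (n%:R ^+ 2).
Proof.
move=> _ c_gt0 _ _ prop_i_n _; exists (16 / c) => C C_ge delta delta_gt0.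
have C_gt0 : 0 < C by apply: lt_le_trans C_ge; rewrite divr_gt0.
have e_delta_ge0 : 0 <= 8 * expR 1 / delta by rewrite divr_ge0 ?mulr_ge0 ?expR_ge0 ?ltW.
pose B := C ^+ 2 + 8 * expR 1 / delta + 2.
exists (maxn N0 (Num.truncn B).+1) => n; rewrite geq_max => /andP[nN0 nB] X r X_le dr_ge.
have B_lt : C ^+ 2 + 8 * expR 1 / delta + 2 < n%:R.
  by apply: lt_le_trans (truncnS_gt B) _; rewrite ler_nat.
have C2_ge0 : 0 <= C ^+ 2 := sqr_ge0 C.
apply: (fail_prob_le c_gt0 C_gt0 _ _ (fun S => (prop_i_n n nN0 S r).1) dr_ge) => //.
- by rewrite -(ger0_norm (ltW C_gt0)) -sqrtr_sqr ler_sqrt ?ler0n; lra.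
- by rewrite -ler_pdivrMr.
- by rewrite -(ler_nat R); lra.
- by rewrite -ler_pdivrMl //; lra.
Qed.
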